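(* There is a constant $C>0$ (independent of $N$ and $k$) such that for every $k\in\mathbb{Z}^2$, $$\hbar^2\sum_{p\in L_k}\lambda_{k,p}^{-1}\le C\log(N),$$ where $L_k=B_{\mathrm F}^c\cap(B_{\mathrm F}+k)$ and $\lambda_{k,p}=\frac12\hbar^2(|p|^2-|p-k|^2)$.
   Context: $N=|B_{\mathrm F}|$ with $B_{\mathrm F}=\{k\in\mathbb{Z}^2:|k|<k_{\mathrm F}\}$ for $k_{\mathrm F}>0$ with $k_{\mathrm F}^2=\frac12(\inf_{p\notin B_{\mathrm F}}|p|^2+\sup_{q\in B_{\mathrm F}}|q|^2)$; $B_{\mathrm F}^c=\mathbb{Z}^2\setminus B_{\mathrm F}$; $\hbar=N^{-1/2}$. (For $k=0$, $L_k=\emptyset$.) *)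

From HB Require Import structures.
From mathcomp Require Import all_boot all_order all_algebra.
From mathcomp Require Import all_classical all_reals.
From mathcomp Require Import exp.
Set Implicit Arguments. Unset Strict Implicit. Unset Printing Implicit Defensive.
Import Order.TTheory GRing.Theory Num.Theory.
Local Open Scope classical_set_scope.
Local Open Scope ring_scope.

Definition Z2 := (int * int)%type.
Definition addZ2 (p q : Z2) : Z2 := (p.1 + q.1, p.2 + q.2).
Definition subZ2 (p q : Z2) : Z2 := (p.1 - q.1, p.2 - q.2).

Definition sqnorm {R : realType} (p : Z2) : R := ((p.1 ^+ 2 + p.2 ^+ 2)%R)%:~R.

Definition BF {R : realType} (kF : R) : set Z2 := [set p | sqnorm p < kF ^+ 2].

Definition admissible_kF {R : realType} (kF : R) : Prop :=
  0 < kF /\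
  kF ^+ 2 = 2^-1 * (inf [set (sqnorm p : R) | p in ~` BF kF]
                    + sup [set (sqnorm q : R) | q in BF kF]).

Definition NF {R : realType} (kF : R) : nat := (\sum_(p \in BF kF) 1)%N.

Definition hbar {R : realType} (kF : R) : R := (Num.sqrt (NF kF)%:R)^-1.

Definition Lk {R : realType} (kF : R) (k : Z2) : set Z2 :=
  (~` BF kF) `&` [set p | exists2 q, BF kF q & p = addZ2 q k].

Definition lambda {R : realType} (kF : R) (k p : Z2) : R :=
  2^-1 * hbar kF ^+ 2 * (sqnorm p - sqnorm (subZ2 p k)).

From HB Require Import structures.
From mathcomp Require Import all_boot all_order all_algebra.
From mathcomp Require Import all_classical all_reals.
From mathcomp Require Import exp.
From mathcomp Require Import ring lra zify.
Set Implicit Arguments. Unset Strict Implicit. Unset Printing Implicit Defensive.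
Import Order.TTheory GRing.Theory Num.Theory.
Local Open Scope classical_set_scope.
Local Open Scope ring_scope.

(* Since lambda_{k,p} = hbar^2 (|p|^2 - |p - k|^2) / 2, it suffices to bound
   sum_{p in L_k} 2 / (|p|^2 - |p - k|^2) by O(log k_F).  Write k = g (a, b)
   with g > 0 and u a + v b = 1, and use the unimodular coordinates
   p = j (u, v) + t (-b, a).  Then j = p . (a, b), so |p|^2 - |p - k|^2 =
   D_j := g (2 j - g alpha) is constant on the column j, while
   alpha |p|^2 = j^2 + y^2 with alpha = a^2 + b^2 and y = alpha t - beta j.
   On a column the values of y form two progressions of step alpha (one on
   each side of y = 0) inside the annulus alpha k_F^2 <= j^2 + y^2 <
   alpha k_F^2 + alpha D_j; two such points e steps apart satisfy
   e^2 alpha <= D_j and e^2 (alpha k_F^2 - j^2) <= D_j^2, which bounds the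
   number of points of the column.  Summing 2 / D_j times this count over the
   window of admissible j, of length about g alpha / 2 + 2 sqrt(alpha) k_F,
   gives a harmonic sum, O(log k_F), plus two sums of inverse square roots,
   O(1).  Finally k_F <= N + 1, as the points (i, 0) with i < k_F lie in B_F. *)

Section ordinal_sums.
Variable R : numDomainType.

Lemma ler_sum_ord_prefix (f g : nat -> R) (n m : nat) :
  (forall i, 0 <= g i) ->
  (forall i, (i < n)%N -> f i <= (if (i < m)%N then g i else 0)) ->
  \sum_(i < n) f i <= \sum_(i < m) g i.
Proof.
move=> g0 fg; apply: le_trans (ler_sum _ (fun (i : 'I_n) _ => fg i (ltn_ord i))) _.
set h := fun i => if (i < m)%N then g i else 0.
have h0 i : 0 <= h i by rewrite /h; case: ifP.
rewrite (big_ord_widen (n + m) h (leq_addr m n)).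
rewrite (big_ord_widen (n + m) g (leq_addl n m)) [X in X <= _]big_mkcond.
rewrite [X in _ <= X]big_mkcond /=.
by apply: ler_sum => i _; case: ifP => _; [rewrite /h | exact: h0].
Qed.

Lemma ler_sum_ord_suffix (f g : nat -> R) (n m : nat) :
  (forall i, 0 <= g i) ->
  (forall i, (i < n)%N -> f i <= (if (m <= i)%N then g (i - m)%N else 0)) ->
  \sum_(i < n) f i <= \sum_(i < n - m) g i.
Proof.
move=> g0 fg; apply: le_trans (ler_sum _ (fun (i : 'I_n) _ => fg i (ltn_ord i))) _.
have [nm|mn] := leqP n m.
  rewrite big1 ?sumr_ge0 // => i _.
  by rewrite leqNgt (leq_trans (ltn_ord i) nm).
rewrite -(big_mkord xpredT (fun i => if (m <= i)%N then g (i - m)%N else 0)).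
rewrite (big_cat_nat (leq0n m) (ltnW mn)) /= big_nat_cond big1 ?add0r; last first.
  by move=> i /andP[/andP[_ im] _]; rewrite leqNgt im.
rewrite (big_addn 0 n m) big_mkord.
by apply: ler_sum => i _; rewrite leq_addl addnK.
Qed.

End ordinal_sums.

Section square_roots.
Variable R : rcfType.

Lemma sum_inv_sqrt_le (m : nat) :
  \sum_(i < m) (Num.sqrt i.+1%:R : R)^-1 <= 2 * Num.sqrt m%:R.
Proof.
elim: m => [|m IH]; first by rewrite big_ord0 sqrtr0 mulr0.
rewrite big_ord_recr /=.
set s := Num.sqrt m.+1%:R : R; set r := Num.sqrt m%:R : R in IH *.
have s2 : s ^+ 2 = m%:R + 1 by rewrite sqr_sqrtr // natr1.
have r2 : r ^+ 2 = m%:R by rewrite sqr_sqrtr.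
have s0 : 0 < s by rewrite sqrtr_gt0 ltr0n.
have r0 : 0 <= r by rewrite sqrtr_ge0.
suff step : s^-1 <= 2 * s - 2 * r by apply: le_trans (lerD IH step) _; lra.
rewrite -(ler_pM2l s0) mulfV ?gt_eqF //.
have : 0 <= (s - r) ^+ 2 by apply: sqr_ge0.
nra.
Qed.

Lemma sum_inv_sqrt_rev (m : nat) :
  \sum_(i < m) (Num.sqrt (m - i)%N%:R : R)^-1 =
  \sum_(i < m) (Num.sqrt i.+1%:R)^-1.
Proof.
rewrite -(big_mkord xpredT (fun i => (Num.sqrt i.+1%:R : R)^-1)).
by rewrite big_rev_mkord subn0; apply: eq_bigr => i _; rewrite subnSK.
Qed.

Lemma ler_div_sqrt (e D Z : R) : 0 < Z -> 0 <= e -> 0 <= D ->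
  e ^+ 2 * Z <= D ^+ 2 -> e <= D / Num.sqrt Z.
Proof.
move=> Z0 e0 D0 eZD.
have s0 : 0 < Num.sqrt Z by rewrite sqrtr_gt0.
rewrite ler_pdivlMr //.
have : (e * Num.sqrt Z) ^+ 2 <= D ^+ 2 by rewrite exprMn sqr_sqrtr // ltW.
have : 0 <= e * Num.sqrt Z by rewrite mulr_ge0 // ltW.
nra.
Qed.

End square_roots.

Section logarithms.
Variable R : realType.

Lemma harmonic_sum_le_ln (n : nat) :
  \sum_(i < n) (i.+1%:R : R)^-1 <= 1 + ln n%:R.
Proof.
elim: n => [|[|n] IH]; first by rewrite big_ord0 ln0 // addr0.
  by rewrite big_ord_recr big_ord0 /= add0r invr1 ln1 addr0.
rewrite big_ord_recr /=.
suff step : (n.+2%:R : R)^-1 <= ln n.+2%:R - ln n.+1%:R.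
  by apply: le_trans (lerD IH step) _; lra.
have -> : ln (n.+1%:R : R) = ln (1 + - (n.+2%:R)^-1) + ln n.+2%:R.
  rewrite -lnM ?posrE ?ltr0n //; last by rewrite subr_gt0 invf_lt1 ?ltr1n.
  congr ln; rewrite mulrDl mul1r mulNr mulVf ?pnatr_eq0 //.
  by rewrite -!natr1; ring.
suff : ln (1 + - (n.+2%:R)^-1) <= - (n.+2%:R : R)^-1.
  by rewrite opprD addrCA subrr addr0 lerNr.
by apply: le_ln1Dx; rewrite ltrN2 invf_lt1 ?ltr1n.
Qed.

Lemma ln2_ge_half : 2^-1 <= ln (2 : R).
Proof.
have : ln (1 + - 2^-1) <= - (2 : R)^-1 by apply: le_ln1Dx; lra.
by rewrite (_ : 1 + - 2^-1 = 2^-1) ?lnV ?posrE ?lerN2 //; lra.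
Qed.

End logarithms.

Lemma fsum_fibres (R : nmodType) (I J : choiceType) (A : set (I * J)) (F : I * J -> R) :
  finite_set A ->
  \sum_(x \in A) F x = \sum_(i \in fst @` A) \sum_(j \in [set j | A (i, j)]) F (i, j).
Proof.
move=> Afin; set P := fst @` A; set Q := snd @` A.
have AX : A `<=` P `*` Q by move=> x Ax; split; exists x.
have Pfin : finite_set P by exact: finite_image.
have Qfin : finite_set Q by exact: finite_image.
transitivity (\sum_(i \in P) \sum_(j \in Q)
    (if (i, j) \in A then F (i, j) else 0)).
  rewrite pair_fsbig // -(setIidr AX) fsbig_mkcondr.
  by apply: eq_fsbigr => -[i j] _ /=; rewrite (setIidr AX).
apply: eq_fsbigr => i _.
have Ai : [set j | A (i, j)] `<=` Q by move=> j Aij; exists (i, j).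
by rewrite -(setIidr Ai) fsbig_mkcondr.
Qed.

Section finite_set_sums.
Variable R : numDomainType.

Lemma ler_fsum (T : choiceType) (A : set T) (f g : T -> R) :
  finite_set A -> (forall x, A x -> f x <= g x) ->
  \sum_(x \in A) f x <= \sum_(x \in A) g x.
Proof.
move=> Afin fg; rewrite !fsbig_finite // big_seq [X in _ <= X]big_seq.
by apply: ler_sum => x; rewrite in_fset_set // inE => /fg.
Qed.

Lemma ler_fsum_nneg_subset (T : choiceType) (A B : set T) (f : T -> R) :
  finite_set B -> A `<=` B -> (forall x, B x -> 0 <= f x) ->
  \sum_(x \in A) f x <= \sum_(x \in B) f x.
Proof.
move=> Bfin AB f0.
rewrite -(setIidr AB) fsbig_mkcondr; apply: ler_fsum => // x Bx.
by case: ifP => // _; exact: f0.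
Qed.

End finite_set_sums.

Lemma fsum_const_le_diam (R : archiRealFieldType) (S : set int) (c E : R) :
  finite_set S -> 0 <= c -> 0 <= E ->
  (forall t t', S t -> S t' -> `|t - t'|%:~R <= E) ->
  \sum_(t \in S) c <= (2 * E + 1) * c.
Proof.
move=> Sfin c0 E0 diam.
have [->|/set0P [t0 St0]] := eqVneq S set0.
  by rewrite fsbig_set0 mulr_ge0 //; lra.
rewrite fsbig_finite // big_const_seq count_predT iter_addr_0 -[c *+ _]mulr_natl.
apply: ler_wpM2r => //.
set m := Num.trunc E; set s := finmap.enum_fset (fset_set S).
have mE : m%:R <= E by have /andP[] := truncn_itv E0.
have near_t0 t : S t -> (`|t - t0| <= m%:Z)%R.
  move=> St; have := diam t t0 St St0.
  rewrite -[`|t - t0|]gez0_abs ?normr_ge0 // abszE => tt0.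
  have : (absz (t - t0) <= m)%N by rewrite truncn_ge_nat.
  lia.
suff : (size s <= 2 * m + 1)%N.
  by rewrite -(ler_nat R) natrD natrM; lra.
pose shift (t : int) := absz (t - t0 + m%:Z).
rewrite -(size_map shift) -[X in (_ <= X)%N](size_iota 0).
apply: uniq_leq_size.
  rewrite map_inj_in_uniq ?finmap.fset_uniq // => x y.
  rewrite /s !in_fset_set // !inE => /near_t0 + /near_t0; rewrite /shift; lia.
move=> z /mapP [x]; rewrite /s in_fset_set // inE => /near_t0 + ->.
by rewrite mem_iota /shift; lia.
Qed.

(* Two points [Y <= Y2] of a progression of step [al] in the annulus
   [Q <= y^2 < Q + al * D], [e] steps apart. *)
Lemma annulus_gap_bound (R : realFieldType) (al D Q Y Y2 e : R) :
  0 < al -> 0 <= e -> 0 <= Y ->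
  Y2 - Y = e * al -> Q <= Y ^+ 2 -> Y2 ^+ 2 < Q + al * D ->
  e ^+ 2 * al <= D /\ e ^+ 2 * Q <= D ^+ 2.
Proof.
move=> al0 e0 Y0 hY hQ hY2.
have eY : Y2 = Y + e * al by lra.
rewrite eY in hY2.
have : al * (2 * Y * e + e ^+ 2 * al) < al * D.
  have : (Y + e * al) ^+ 2 = Y ^+ 2 + al * (2 * Y * e + e ^+ 2 * al) by ring.
  lra.
rewrite ltr_pM2l // => hD.
have Ye : 0 <= Y * e by apply: mulr_ge0.
split; first by nra.
have eY20 : 0 <= e * Y2 by rewrite eY; nra.
have eY2D : e * Y2 <= D by rewrite eY; nra.
have h2 : (e * Y2) ^+ 2 <= D ^+ 2 by nra.
have h3 : Q <= Y2 ^+ 2 by rewrite eY; nra.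
have : e ^+ 2 * Q <= e ^+ 2 * Y2 ^+ 2 by apply: ler_wpM2l => //; apply: sqr_ge0.
nra.
Qed.

Definition isqnorm (p : Z2) : int := p.1 ^+ 2 + p.2 ^+ 2.

Section unimodular_coordinates.
Variables (a b u v : int).
Hypothesis bezout : u * a + v * b = 1.

Definition point_of (x : Z2) : Z2 := (x.1 * u - x.2 * b, x.1 * v + x.2 * a).
Definition coords_of (p : Z2) : Z2 := (p.1 * a + p.2 * b, - (v * p.1) + u * p.2).
Definition alpha : int := a ^+ 2 + b ^+ 2.
Definition beta : int := u * b - v * a.
Definition transverse (x : Z2) : int := x.2 * alpha - x.1 * beta.
Definition kvec (g : int) : Z2 := (g * a, g * b).

Lemma dot_point_of x : (point_of x).1 * a + (point_of x).2 * b = x.1.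
Proof.
have -> : (point_of x).1 * a + (point_of x).2 * b = x.1 * (u * a + v * b).
  by rewrite /point_of /=; ring.
by rewrite bezout mulr1.
Qed.

Lemma point_ofK : cancel point_of coords_of.
Proof.
case=> j t; rewrite /coords_of dot_point_of; congr pair.
have -> : - (v * (point_of (j, t)).1) + u * (point_of (j, t)).2 = t * (u * a + v * b).
  by rewrite /point_of /=; ring.
by rewrite bezout mulr1.
Qed.

Lemma coords_ofK : cancel coords_of point_of.
Proof.
case=> p1 p2; rewrite /point_of /coords_of /=; congr pair.
  have -> : (p1 * a + p2 * b) * u - (- (v * p1) + u * p2) * b = p1 * (u * a + v * b).
    by ring.
  by rewrite bezout mulr1.
have -> : (p1 * a + p2 * b) * v + (- (v * p1) + u * p2) * a = p2 * (u * a + v * b).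
  by ring.
by rewrite bezout mulr1.
Qed.

Lemma alpha_gt0 : 0 < alpha.
Proof.
rewrite /alpha; have := bezout.
by case: (eqVneq a 0) => [->|a0]; case: (eqVneq b 0) => [->|b0]; nia.
Qed.

Lemma alpha_isqnorm_point x :
  alpha * isqnorm (point_of x) = x.1 ^+ 2 + transverse x ^+ 2.
Proof.
set p := point_of x.
have -> : alpha * isqnorm p = (p.1 * a + p.2 * b) ^+ 2 + (p.1 * b - p.2 * a) ^+ 2.
  by rewrite /alpha /isqnorm; ring.
by rewrite dot_point_of /p /point_of /transverse /alpha /beta /=; ring.
Qed.

Lemma alpha_isqnorm_point_sub g x :
  alpha * isqnorm (subZ2 (point_of x) (kvec g)) =
  (x.1 - g * alpha) ^+ 2 + transverse x ^+ 2.
Proof.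
set p := point_of x.
have -> : alpha * isqnorm (subZ2 p (kvec g)) =
    (p.1 * a + p.2 * b - g * alpha) ^+ 2 + (p.1 * b - p.2 * a) ^+ 2.
  by rewrite /alpha /isqnorm /subZ2 /kvec /=; ring.
by rewrite dot_point_of /p /point_of /transverse /alpha /beta /=; ring.
Qed.

Lemma isqnorm_point_diff g x :
  isqnorm (point_of x) - isqnorm (subZ2 (point_of x) (kvec g)) =
  g * (2 * x.1 - g * alpha).
Proof.
set p := point_of x.
have -> : isqnorm p - isqnorm (subZ2 p (kvec g)) =
    2 * g * (p.1 * a + p.2 * b) - g ^+ 2 * alpha.
  by rewrite /isqnorm /subZ2 /kvec /alpha /=; ring.
by rewrite dot_point_of; ring.
Qed.

End unimodular_coordinates.

Lemma LkP (R : realType) (kF : R) (k p : Z2) :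
  Lk kF k p <-> kF ^+ 2 <= sqnorm p /\ sqnorm (subZ2 p k) < kF ^+ 2.
Proof.
split=> [[nB [q Bq pE]]|[h1 h2]].
  have -> : subZ2 p k = q by rewrite pE; case: q {Bq pE} => q1 q2; rewrite /subZ2 /= !addrK.
  by split=> //; rewrite leNgt; apply/negP.
split; first by move=> /= hB; move: h1; rewrite leNgt hB.
exists (subZ2 p k) => //.
by case: p {h1 h2} => p1 p2; rewrite /addZ2 /subZ2 /= !subrK.
Qed.

Section fixed_direction.
Variable R : realType.
Variables (kF : R) (a b u v g : int).
Hypotheses (kF_gt0 : 0 < kF) (g_gt0 : 0 < g) (bezout : u * a + v * b = 1).
Hypothesis BF_fin : finite_set (BF kF).

Let al : int := alpha a b.
Let alR : R := al%:~R.
Let W : R := alR * kF ^+ 2.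
Let J : R := Num.sqrt W.
Let ga : R := (g * al)%:~R.
Let y := transverse a b u v.
Let k := kvec a b g.
Let LkC : set Z2 := point_of a b u v @^-1` Lk kF k.
(* The value of [|p|^2 - |p - k|^2] on the column [j] of [LkC], see [isqnorm_point_diff]. *)
Let Dj (j : int) : R := (g * (2 * j - g * al))%:~R.

Let al_gt0 : 0 < al := alpha_gt0 bezout.
Let alR_gt0 : 0 < alR. Proof. by rewrite ltr0z. Qed.
Let W_gt0 : 0 < W. Proof. by rewrite mulr_gt0 // exprn_gt0. Qed.
Let J_gt0 : 0 < J. Proof. by rewrite sqrtr_gt0. Qed.
Let J_sqr : J ^+ 2 = W. Proof. by rewrite sqr_sqrtr // ltW. Qed.

Let LkC_fin : finite_set LkC.
Proof.
have Lk_fin : finite_set (Lk kF k).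
  by apply: sub_finite_set (finite_image (addZ2^~ k) BF_fin) => p [_ [q Bq ->]]; exists q.
apply: sub_finite_set (finite_image (coords_of a b u v) Lk_fin) => x LkCx.
by exists (point_of a b u v x); rewrite ?(point_ofK bezout).
Qed.

Lemma LkC_annulus x : LkC x ->
  W <= (x.1 ^+ 2 + y x ^+ 2)%:~R /\ ((x.1 - g * al) ^+ 2 + y x ^+ 2)%:~R < W.
Proof.
move=> /LkP [h1 h2].
rewrite -alpha_isqnorm_point // -(alpha_isqnorm_point_sub bezout g) !rmorphM /=.
by split; [rewrite ler_pM2l | rewrite ltr_pM2l].
Qed.

Lemma LkC_gap_gt0 x : LkC x -> 0 < 2 * x.1 - g * al.
Proof.
move=> /LkC_annulus [h1 h2].
have := lt_le_trans h2 h1; rewrite ltr_int.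
have : 0 < g * al by rewrite mulr_gt0.
move: (g * al) => G; nia.
Qed.

Lemma LkC_window x : LkC x -> ga - J < x.1%:~R < ga + J.
Proof.
move=> /LkC_annulus [_ h2].
rewrite -ltr_distl -(@ltr_pXn2r _ 2) ?nnegrE ?normr_ge0 ?ltW //.
rewrite real_normK ?num_real // J_sqr; apply: le_lt_trans h2.
by rewrite /ga -rmorphB -rmorphXn ler_int lerDl sqr_ge0.
Qed.

Lemma LkC_column_pair j t t' : LkC (j, t) -> LkC (j, t') ->
  (0 <= y (j, t)) = (0 <= y (j, t')) ->
  `|t - t'|%:~R ^+ 2 * alR <= Dj j /\
  `|t - t'|%:~R ^+ 2 * (W - j%:~R ^+ 2) <= Dj j ^+ 2.
Proof.
wlog tt' : t t' / t <= t'.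
  move=> H Ct Ct' s; have [tt'|/ltW t't] := leP t t'; first exact: H.
  by rewrite distrC; apply: H => //; rewrite s.
move=> Ct Ct' same_side.
have ydiff : y (j, t') - y (j, t) = (t' - t) * al.
  by rewrite /y /transverse /= /al; ring.
have [c1 c2] := LkC_annulus Ct; have [c1' c2'] := LkC_annulus Ct'.
have alDj : alR * Dj j = j%:~R ^+ 2 - (j - g * al)%:~R ^+ 2.
  by rewrite /alR /Dj -rmorphM -!rmorphXn -rmorphB; congr intr; ring.
rewrite distrC ger0_norm ?subr_ge0 //.
rewrite /= !rmorphD !rmorphXn /= in c1 c2 c1' c2'.
have e0 : 0 <= (t' - t)%:~R :> R by rewrite ler0z subr_ge0.
have [y0|y0] := lerP 0 (y (j, t)).
  apply: (@annulus_gap_bound _ alR (Dj j) (W - j%:~R ^+ 2)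
    (y (j, t))%:~R (y (j, t'))%:~R) => //; try lra.
  - by rewrite ler0z.
  - by rewrite -rmorphB ydiff rmorphM.
have y0' : y (j, t') < 0 by rewrite ltNge -same_side -ltNge.
apply: (@annulus_gap_bound _ alR (Dj j) (W - j%:~R ^+ 2)
  (- (y (j, t'))%:~R) (- (y (j, t))%:~R)) => //; rewrite ?sqrrN; try lra.
- by rewrite oppr_ge0 lerz0 ltW.
- by rewrite opprK addrC -rmorphB ydiff rmorphM.
Qed.

Lemma column_sum_le j (E : R) : 0 < Dj j -> 0 <= E ->
  (forall e, 0 <= e -> e ^+ 2 * alR <= Dj j ->
     e ^+ 2 * (W - j%:~R ^+ 2) <= Dj j ^+ 2 -> e <= E) ->
  \sum_(t \in [set t | LkC (j, t)]) 2 * (Dj j)^-1 <= 2 * (Dj j)^-1 * (4 * E + 2).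
Proof.
move=> Dj0 E0 HE.
set C := [set t | LkC (j, t)]; set c := 2 * (Dj j)^-1.
have Cfin : finite_set C.
  by apply: sub_finite_set (finite_image snd LkC_fin) => t Ct; exists (j, t).
have c0 : 0 <= c by rewrite mulr_ge0 // invr_ge0 ltW.
have half_le (S : set int) : S `<=` C ->
    (forall t t', S t -> S t' -> (0 <= y (j, t)) = (0 <= y (j, t'))) ->
    \sum_(t \in S) c <= (2 * E + 1) * c.
  move=> SC Ss; apply: fsum_const_le_diam => //; first exact: sub_finite_set SC Cfin.
  move=> t t' St St'.
  have [h1 h2] := LkC_column_pair (SC _ St) (SC _ St') (Ss _ _ St St').
  by apply: HE; rewrite ?ler0z.
rewrite (fsbigID [set t | 0 <= y (j, t)]) //.
have above : \sum_(t \in C `&` [set t | 0 <= y (j, t)]) c <= (2 * E + 1) * c.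
  apply: half_le; first exact: subIsetl.
  by move=> t t' [_ /= ->] [_ /= ->].
have below : \sum_(t \in C `&` ~` [set t | 0 <= y (j, t)]) c <= (2 * E + 1) * c.
  apply: half_le; first exact: subIsetl.
  by move=> t t' [_ /= /negP/negbTE ->] [_ /= /negP/negbTE ->].
apply: le_trans (lerD above below) _.
by have -> : c * (4 * E + 2) = (2 * E + 1) * c + (2 * E + 1) * c by ring.
Qed.

Lemma sum_Lk_by_columns :
  \sum_(p \in Lk kF k) 2 * ((sqnorm p : R) - sqnorm (subZ2 p k))^-1 =
  \sum_(j \in fst @` LkC) \sum_(t \in [set t | LkC (j, t)]) 2 * (Dj j)^-1.
Proof.
have -> : Lk kF k = point_of a b u v @` LkC.
  apply/seteqP; split=> [p Lp|_ [x LkCx <-] //].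
  by exists (coords_of a b u v p); rewrite /LkC /preimage /= (coords_ofK bezout).
rewrite fsbig_image; last by move=> x1 x2 _ _; exact: (can_inj (point_ofK bezout)).
rewrite fsum_fibres //; apply: eq_fsbigr => j _; apply: eq_fsbigr => t _.
by rewrite /Dj -(isqnorm_point_diff bezout g (j, t)) rmorphB.
Qed.

(* Each of the two bounds of [LkC_column_pair] yields [e ^+ 2 * Zj j <= Dj j ^+ 2]:
   away from the edge [j = J] because [W - j ^+ 2 >= J * (J - j)]. *)
Let Zj (j : int) : R := if 1 <= J - j%:~R then J * (J - j%:~R) else alR * Dj j.

Lemma column_sum_le_Zj j : (fst @` LkC) j ->
  \sum_(t \in [set t | LkC (j, t)]) 2 * (Dj j)^-1 <=
  4 * (Dj j)^-1 + 8 * (Num.sqrt (Zj j))^-1.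
Proof.
move=> [[j' t] LkCx /= jE]; subst j'.
have /= gap0 := LkC_gap_gt0 LkCx.
have j0 : 0 < j.
  have : 0 < g * al by rewrite mulr_gt0.
  by move: (g * al) gap0 => G; lia.
have Dj0 : 0 < Dj j by rewrite ltr0z mulr_gt0.
have j0R : 0 < j%:~R :> R by rewrite ltr0z.
have Zj0 : 0 < Zj j.
  by rewrite /Zj; case: ifP => h; rewrite mulr_gt0 //; lra.
have sZj0 : 0 < Num.sqrt (Zj j) by rewrite sqrtr_gt0.
apply: le_trans (@column_sum_le j (Dj j / Num.sqrt (Zj j)) Dj0 _ _) _.
- by rewrite divr_ge0 // ltW.
- move=> e e0 h1 h2; apply: ler_div_sqrt => //; first exact: ltW.
  rewrite /Zj; case: ifP => h.
    apply: le_trans h2; rewrite ler_wpM2l ?sqr_ge0 // -J_sqr; nra.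
  by rewrite mulrA expr2 ler_wpM2r // ltW.
rewrite [leLHS](_ : _ = 4 * (Dj j)^-1 + 8 * (Num.sqrt (Zj j))^-1) //.
have : (0 : R) < (2 * j - g * al)%:~R by rewrite ltr0z.
rewrite rmorphB !rmorphM /= => gap0R.
by field; rewrite (gt_eqF sZj0) (gt_eqF gap0R) intr_eq0 gt_eqF.
Qed.

Let jlow : R := Num.max (ga / 2) (ga - J).
Let jstart : int := Num.floor jlow + 1.
Let ncols : nat := (Num.trunc (ga + J - jstart%:~R)).+1.
Let nnear : nat := Num.trunc (J - jstart%:~R).

Let ga_ge1 : 1 <= ga.
Proof. by rewrite ler1z; have := mulr_gt0 g_gt0 al_gt0; lia. Qed.
Let gaE : ga = g%:~R * alR.
Proof. by rewrite /ga rmorphM. Qed.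
Let jlow_ge : ga / 2 <= jlow /\ ga - J <= jlow.
Proof. by rewrite /jlow !le_max !lexx orbT. Qed.
Let jstart_gt : jlow < jstart%:~R.
Proof. exact: floorD1_gt. Qed.
Let jstart_gap_ge1 : 1 <= 2 * jstart - g * al.
Proof.
suff : (0 : R) < (2 * jstart - g * al)%:~R by rewrite ltr0z; lia.
by rewrite rmorphB rmorphM /= -/ga; have := jlow_ge; have := jstart_gt; lra.
Qed.
Let jstart_gt0 : 0 < jstart.
Proof. by have := jstart_gap_ge1; have := mulr_gt0 g_gt0 al_gt0; lia. Qed.

Let Dj_shift (i : nat) : Dj (jstart + i%:Z) = (g * ((2 * jstart - g * al) + 2 * i%:Z))%:~R.
Proof. by rewrite /Dj; congr intr; ring. Qed.

Let Dj_shift_ge (i : nat) : i.+1%:R <= Dj (jstart + i%:Z).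
Proof.
rewrite Dj_shift -[i.+1%:R]/(i.+1%:Z%:~R) ler_int.
by have := jstart_gap_ge1; nia.
Qed.

Let Dj_shift_gt0 (i : nat) : 0 < Dj (jstart + i%:Z).
Proof. by apply: lt_le_trans (Dj_shift_ge i); rewrite ltr0n. Qed.

Lemma columns_sub_window : fst @` LkC `<=` [set jstart + i%:Z | i in `I_ncols].
Proof.
move=> _ [x LkCx <-].
have gap0 := LkC_gap_gt0 LkCx; have /andP[lo hi] := LkC_window LkCx.
have jlow_lt : jlow < x.1%:~R.
  rewrite /jlow gt_max lo andbT.
  have : (0 : R) < (2 * x.1 - g * al)%:~R by rewrite ltr0z.
  by rewrite rmorphB rmorphM /= -/ga; lra.
have jstart_le : jstart <= x.1.
  by rewrite /jstart -ltzD1 ltrD2r floor_lt_int.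
exists `|x.1 - jstart|%N; last by lia.
rewrite /= /ncols ltnS truncn_ge_nat.
  rewrite -[_%:R]/((`|x.1 - jstart|%N)%:Z%:~R) gez0_abs ?subr_ge0 // rmorphB /=.
  by lra.
have : jstart%:~R <= x.1%:~R :> R by rewrite ler_int.
lra.
Qed.

Lemma sum_columns_le (F : int -> R) : (forall i : nat, 0 <= F (jstart + i%:Z)) ->
  \sum_(j \in fst @` LkC) F j <= \sum_(i < ncols) F (jstart + i%:Z).
Proof.
move=> F0.
have win_fin : finite_set [set jstart + i%:Z | i in `I_ncols].
  exact: finite_image (finite_II ncols).
apply: le_trans (ler_fsum_nneg_subset win_fin columns_sub_window _) _.
  by move=> _ [i _ <-].
rewrite fsbig_image -?fsbig_ord //.
by move=> i i' _ _ /addrI /eqP; rewrite eqz_nat => /eqP.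
Qed.

Let ncols_le (c : R) : 0 <= c -> ga + J - jlow <= c -> ncols%:R <= c + 1.
Proof.
move=> c0 hc; rewrite /ncols -natr1 lerD2r.
set x := ga + J - jstart%:~R.
have x_lt : x < c by have := jstart_gt; rewrite /x; lra.
have [x_lt1|x_ge1] := ltP x 1.
  suff -> : Num.trunc x = 0%N by [].
  by apply/eqP; rewrite -leqn0 truncn_le_nat.
have /andP[tx _] := truncn_itv (le_trans ler01 x_ge1 : 0 <= x).
lra.
Qed.

Lemma sum_invDj_le_harmonic : ga < 4 * J ->
  \sum_(i < ncols) (Dj (jstart + i%:Z))^-1 <= 1 + ln (12 * kF ^+ 2 + 1).
Proof.
move=> gaJ.
apply: le_trans (_ : \sum_(i < ncols) (i.+1%:R)^-1 <= _).
  apply: ler_sum => i _; rewrite lef_pV2 ?posrE ?ltr0n //.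
have J_lt : J < 4 * kF ^+ 2.
  have kF2 : 0 < kF ^+ 2 by rewrite exprn_gt0.
  have al_ga : alR <= ga by rewrite gaE ler_peMl ?ler1z // ltW.
  have : alR * kF ^+ 2 < (4 * J) * kF ^+ 2 by rewrite ltr_pM2r //; lra.
  by move=> h; rewrite -(ltr_pM2l J_gt0) -expr2 J_sqr /W; lra.
apply: le_trans (harmonic_sum_le_ln _ ncols) _; rewrite lerD2l ler_ln ?posrE ?ltr0n //.
  by apply: le_trans (ncols_le (c := 3 * J) _ _) _; have := J_gt0; have := jlow_ge; lra.
by have := sqr_ge0 kF; lra.
Qed.

Lemma sum_invDj_le_const : 4 * J <= ga ->
  \sum_(i < ncols) (Dj (jstart + i%:Z))^-1 <= 3.
Proof.
move=> Jga; have ga2 : 0 < ga / 2 by have := ga_ge1; lra.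
apply: le_trans (_ : \sum_(i < ncols) (ga / 2)^-1 <= _).
  apply: ler_sum => i _; rewrite lef_pV2 ?posrE //.
  have : (2 * jstart - g * al)%:~R <= Dj (jstart + i%:Z).
    by rewrite Dj_shift ler_int; have := jstart_gap_ge1; nia.
  by rewrite rmorphB rmorphM /= -/ga; have := jlow_ge; have := jstart_gt; lra.
rewrite sumr_const card_ord -mulr_natl.
have ncols_le' : ncols%:R <= ga / 2 + 1 by apply: ncols_le; have := jlow_ge; lra.
have inv_le2 : (ga / 2)^-1 <= 2.
  by rewrite -[X in _ <= X]invrK lef_pV2 ?posrE //; have := ga_ge1; lra.
have : ncols%:R * (ga / 2)^-1 <= (ga / 2 + 1) * (ga / 2)^-1.
  by rewrite ler_pM2r ?invr_gt0.
by rewrite mulrDl mulfV ?gt_eqF // mul1r; lra.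
Qed.

Lemma sum_invDj_le : \sum_(i < ncols) (Dj (jstart + i%:Z))^-1 <= 4 + ln (12 * kF ^+ 2 + 1).
Proof.
have ln0 : 0 <= ln (12 * kF ^+ 2 + 1 : R) by apply: ln_ge0; have := sqr_ge0 kF; lra.
have [gaJ|Jga] := ltP ga (4 * J).
  by apply: le_trans (sum_invDj_le_harmonic gaJ) _; lra.
by apply: le_trans (sum_invDj_le_const Jga) _; lra.
Qed.

Let nnear_le_J : nnear%:R <= J.
Proof.
have := jstart_gt0; rewrite -(ltr0z R) => j0.
have [lt1|ge1] := ltP (J - jstart%:~R) 1.
  suff -> : nnear = 0%N by apply: ltW.
  by apply/eqP; rewrite -leqn0 truncn_le_nat.
have /andP[t1 _] := truncn_itv (le_trans ler01 ge1 : 0 <= J - jstart%:~R).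
by rewrite /nnear; lra.
Qed.

Let near_edge (j : int) : R :=
  if 1 <= J - j%:~R then (Num.sqrt (J * (J - j%:~R)))^-1 else 0.
Let far_from_edge (j : int) : R :=
  if 1 <= J - j%:~R then 0 else (Num.sqrt (alR * Dj j))^-1.

Lemma sum_near_edge_le : \sum_(i < ncols) near_edge (jstart + i%:Z) <= 2.
Proof.
apply: le_trans (ler_sum_ord_prefix (m := nnear)
  (f := fun i => near_edge (jstart + i%:Z))
  (g := fun i => (Num.sqrt (J * (nnear - i)%N%:R))^-1) _ _) _.
- by move=> i; rewrite invr_ge0 sqrtr_ge0.
- move=> i _; rewrite /near_edge.
  case: ifP => [|_]; last by case: ifP; rewrite ?invr_ge0 ?sqrtr_ge0.
  rewrite rmorphD /= => h.
  have X0 : 0 <= J - jstart%:~R by have := ler0n R i; lra.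
  have /andP[tX _] := truncn_itv X0.
  have i_lt : (i < nnear)%N by rewrite truncn_gt_nat -natr1; lra.
  have near0 : 0 < J * (nnear - i)%N%:R by rewrite mulr_gt0 // ltr0n subn_gt0.
  rewrite i_lt lef_pV2 ?posrE ?sqrtr_gt0 //; last by rewrite mulr_gt0 //; lra.
  rewrite ler_sqrt; last by rewrite mulr_ge0 //; [exact: ltW | lra].
  rewrite ler_pM2l // natrB ?(ltnW i_lt) //.
  by rewrite /nnear in tX; lra.
rewrite (eq_bigr (fun i : 'I_nnear =>
  (Num.sqrt J)^-1 * (Num.sqrt (nnear - i)%N%:R)^-1)); last first.
  by move=> i _; rewrite sqrtrM ?invfM // ltW.
rewrite -mulr_sumr sum_inv_sqrt_rev.
have sJ0 : 0 < Num.sqrt J by rewrite sqrtr_gt0.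
apply: le_trans (ler_wpM2l _ (sum_inv_sqrt_le _ nnear)) _; first by rewrite invr_ge0 ltW.
rewrite mulrCA -[X in _ <= X]mulr1 ler_pM2l // mulrC ler_pdivrMr // mul1r.
by rewrite ler_sqrt ?nnear_le_J // ltW.
Qed.

Let ncols_sub_nnear_le : (ncols - nnear)%N%:R <= 4 * ga.
Proof.
have := ga_ge1; have J0 := J_gt0.
have t1 : J - jstart%:~R < nnear%:R + 1 by rewrite natr1; apply: truncnS_gt.
have [lt1|ge1] := ltP (ga + J - jstart%:~R) 1.
  have : (Num.trunc (ga + J - jstart%:~R) <= 0)%N by rewrite truncn_le_nat.
  rewrite leqn0 => /eqP t0.
  have : ((ncols - nnear)%N <= 1)%N by rewrite /ncols t0 leq_subr.
  by rewrite -(ler_nat R); lra.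
have /andP[t2 _] := truncn_itv (le_trans ler01 ge1 : 0 <= ga + J - jstart%:~R).
have [|lt] := leqP ncols nnear; first by rewrite -subn_eq0 => /eqP ->; lra.
by rewrite natrB ?(ltnW lt) // /ncols -natr1; lra.
Qed.

Lemma sum_far_from_edge_le : \sum_(i < ncols) far_from_edge (jstart + i%:Z) <= 4.
Proof.
have ga1 := ga_ge1.
apply: le_trans (ler_sum_ord_suffix (m := nnear)
  (f := fun i => far_from_edge (jstart + i%:Z))
  (g := fun i => (Num.sqrt (ga * i.+1%:R))^-1) _ _) _.
- by move=> i; rewrite invr_ge0 sqrtr_ge0.
- move=> i _; rewrite /far_from_edge.
  case: ifP => [_|]; first by case: ifP; rewrite ?invr_ge0 ?sqrtr_ge0.
  move/negbT; rewrite -ltNge rmorphD /= => h.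
  have i_ge : (nnear <= i)%N by rewrite truncn_le_nat -natr1; lra.
  rewrite i_ge lef_pV2 ?posrE ?sqrtr_gt0 ?mulr_gt0 ?Dj_shift_gt0 ?ltr0n //; last by lra.
  rewrite ler_sqrt; last by rewrite mulr_ge0 // ltW ?Dj_shift_gt0.
  have -> : alR * Dj (jstart + i%:Z) = ga * ((2 * jstart - g * al) + 2 * i%:Z)%:~R.
    by rewrite Dj_shift gaE !rmorphM /=; ring.
  rewrite ler_pM2l; last by lra.
  rewrite -[_%:R]/(((i - nnear).+1)%:Z%:~R) ler_int.
  by have := jstart_gap_ge1; lia.
rewrite (eq_bigr (fun i : 'I_(ncols - nnear) =>
  (Num.sqrt ga)^-1 * (Num.sqrt i.+1%:R)^-1)); last first.
  by move=> i _; rewrite sqrtrM ?invfM //; lra.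
rewrite -mulr_sumr.
have sga0 : 0 < Num.sqrt ga by rewrite sqrtr_gt0; lra.
apply: le_trans (ler_wpM2l _ (sum_inv_sqrt_le _ (ncols - nnear))) _.
  by rewrite invr_ge0 ltW.
have -> : (4 : R) = 2 * 2 by ring.
rewrite mulrCA ler_pM2l // mulrC ler_pdivrMr //.
set s := Num.sqrt (ncols - nnear)%N%:R.
have s_sqr : s ^+ 2 = (ncols - nnear)%N%:R by rewrite sqr_sqrtr.
have sga_sqr : Num.sqrt ga ^+ 2 = ga by rewrite sqr_sqrtr //; lra.
have s0 : 0 <= s by rewrite sqrtr_ge0.
have := ncols_sub_nnear_le; nra.
Qed.

Lemma sum_Lk_kvec_le :
  \sum_(p \in Lk kF k) 2 * ((sqnorm p : R) - sqnorm (subZ2 p k))^-1 <=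
  64 + 4 * ln (12 * kF ^+ 2 + 1).
Proof.
rewrite sum_Lk_by_columns.
apply: le_trans (_ : \sum_(j \in fst @` LkC)
    (4 * (Dj j)^-1 + 8 * (Num.sqrt (Zj j))^-1) <= _).
  by apply: ler_fsum => [|j /column_sum_le_Zj //]; exact: finite_image.
apply: le_trans (sum_columns_le _) _.
  by move=> i; rewrite addr_ge0 ?mulr_ge0 ?invr_ge0 ?sqrtr_ge0 // ltW ?Dj_shift_gt0.
have split_Zj j : (Num.sqrt (Zj j))^-1 = near_edge j + far_from_edge j.
  by rewrite /Zj /near_edge /far_from_edge; case: ifP; rewrite ?addr0 ?add0r.
under eq_bigr do rewrite split_Zj.
rewrite big_split /= -!mulr_sumr big_split /=.
have := sum_invDj_le; have := sum_near_edge_le; have := sum_far_from_edge_le.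
lra.
Qed.

End fixed_direction.

Lemma kvec_decomp (k : Z2) : k != (0, 0) ->
  exists g a b u v : int, [/\ 0 < g, k = kvec a b g & u * a + v * b = 1].
Proof.
case: k => a b nz; set g := gcdz a b.
have g_gt0 : 0 < g.
  rewrite lt_def {2}/g /gcdz andbT gcdz_eq0.
  by apply: contra nz => /andP[/eqP -> /eqP ->].
have [u [v bez]] := Bezoutz a b.
have ea : (a %/ g)%Z * g = a by apply/divzK/dvdz_gcdl.
have eb : (b %/ g)%Z * g = b by apply/divzK/dvdz_gcdr.
exists g, (a %/ g)%Z, (b %/ g)%Z, u, v; split => //.
  by rewrite /kvec ![g * _]mulrC ea eb.
apply: (mulIf (lt0r_neq0 g_gt0)); rewrite mul1r; transitivity (u * a + v * b) => //.
by rewrite -[in RHS]ea -[in RHS]eb; ring.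
Qed.

Lemma Lk0 (R : realType) (kF : R) : Lk kF (0, 0) = set0.
Proof.
apply/seteqP; split=> // p /LkP [].
have -> : subZ2 p (0, 0) = p by case: p => p1 p2; rewrite /subZ2 /= !subr0.
by move=> /le_lt_trans/[apply]; rewrite ltxx.
Qed.

Lemma sum_Lk_le (R : realType) (kF : R) (k : Z2) : 0 < kF -> finite_set (BF kF) ->
  \sum_(p \in Lk kF k) 2 * ((sqnorm p : R) - sqnorm (subZ2 p k))^-1 <=
  64 + 4 * ln (12 * kF ^+ 2 + 1).
Proof.
move=> kF_gt0 BF_fin.
have [->|k_neq0] := eqVneq k (0, 0).
  rewrite Lk0 fsbig_set0 addr_ge0 // mulr_ge0 // ln_ge0 //.
  by have := sqr_ge0 kF; lra.
have [g [a [b [u [v [g_gt0 -> bez]]]]]] := kvec_decomp k_neq0.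
exact: sum_Lk_kvec_le kF_gt0 g_gt0 bez BF_fin.
Qed.

(* For infinite [BF kF] the finite-support sum [NF kF] takes the junk value [0]. *)
Lemma BF_finite (R : realType) (kF : R) : (0 < NF kF)%N -> finite_set (BF kF).
Proof.
move=> N_gt0; apply: contrapT => nfin; move: N_gt0.
rewrite /NF fsbig_dflt // => fin; apply: nfin.
by apply: sub_finite_set fin => p Bp; split.
Qed.

Lemma truncn_le_NF (R : realType) (kF : R) : finite_set (BF kF) ->
  (Num.trunc kF <= NF kF)%N.
Proof.
move=> BF_fin; rewrite /NF fsbig_finite // sum1_size.
rewrite -[X in (X <= _)%N](size_iota 0) -(size_map (fun i : nat => (i%:Z, 0%:Z))).
apply: uniq_leq_size; first by rewrite map_inj_uniq ?iota_uniq // => i j [].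
move=> p /mapP [i]; rewrite mem_iota add0n => i_lt ->.
rewrite in_fset_set // inE /BF /= /sqnorm /= expr0n addr0 rmorphXn /=.
have : i.+1%:R <= kF by rewrite -truncn_gt_nat.
rewrite -natr1 -[i%:~R]/(i%:R : R) => ikF.
have : (0 : R) <= i%:R by [].
nra.
Qed.

Lemma hbar_sqr_mul_lambdaV (R : realType) (kF : R) (k p : Z2) : hbar kF != 0 ->
  hbar kF ^+ 2 * (lambda kF k p)^-1 = 2 * ((sqnorm p : R) - sqnorm (subZ2 p k))^-1.
Proof.
move=> hbar_neq0; rewrite /lambda; set D := (_ - _ : R).
have [->|D_neq0] := eqVneq D 0; first by rewrite !(mulr0, invr0).
by field; rewrite D_neq0 hbar_neq0.
Qed.

Lemma kF_bound_le_ln_NF (R : realType) (kF : R) : 0 < kF -> (2 <= NF kF)%N ->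
  64 + 4 * ln (12 * kF ^+ 2 + 1) <= 200 * ln (NF kF)%:R.
Proof.
move=> kF_gt0 N_ge2; set N := NF kF.
have N2 : 2 <= N%:R :> R by rewrite (ler_nat R 2 N).
have lnN : 2^-1 <= ln (N%:R : R).
  by apply: le_trans (ln2_ge_half R) _; rewrite ler_ln ?posrE //; lra.
have kF_lt : kF < N%:R + 1.
  apply: lt_le_trans (truncnS_gt kF) _.
  by rewrite -natr1 lerD2r ler_nat; apply/truncn_le_NF/BF_finite/(leq_trans _ N_ge2).
have : ln (12 * kF ^+ 2 + 1) <= ln (2 ^+ 6 * N%:R ^+ 2 : R).
  rewrite ler_ln ?posrE ?mulr_gt0 ?exprn_gt0 //; try lra; last by have := sqr_ge0 kF; lra.
  have : kF ^+ 2 <= (N%:R + 1) ^+ 2 by rewrite ler_pXn2r ?nnegrE //; lra.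
  nra.
rewrite lnM ?posrE ?exprn_gt0 //; last by lra.
rewrite !lnXn //; last by lra.
have : ln (2 : R) <= ln N%:R by rewrite ler_ln ?posrE //; lra.
rewrite !mulr_natl; lra.
Qed.

Theorem propositionA1 (R : realType) :
  exists C : R, 0 < C /\
    forall kF : R, admissible_kF kF -> (2 <= NF kF)%N ->
    forall k : Z2,
      hbar kF ^+ 2 * (\sum_(p \in Lk kF k) (lambda kF k p)^-1)
        <= C * ln ((NF kF)%:R).
Proof.
exists 200; split=> [|kF [kF_gt0 _] N_ge2 k]; first lra.
have N_gt0 : (0 < NF kF)%N by apply: leq_trans N_ge2.
have hbar_neq0 : hbar kF != 0.
  by rewrite invr_eq0 sqrtr_eq0 -ltNge ltr0n.
rewrite mulr_fsumr (eq_fsbigr (fun p => 2 * ((sqnorm p : R) - sqnorm (subZ2 p k))^-1));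
  last by move=> p _; exact: hbar_sqr_mul_lambdaV.
apply: le_trans (sum_Lk_le k kF_gt0 (BF_finite N_gt0)) _.
exact: kF_bound_le_ln_NF.
Qed.
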